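(* For a meet-semilattice $A$, the following are equivalent: (1) $A$ is proHeyting. (2) $\mathcal{BL}(\mathcal{DM} A) = \mathcal{DM} A$. (3) $\mathrm{p}\mathcal{H}(\mathcal{DM} A) = \mathcal{DM} A$.
   Context: Let $A$ be a meet-semilattice. $\mathcal{DM} A$ is the Dedekind-MacNeille completion of $A$ (the complete lattice of normal ideals $N=N^{u\ell}$ of $A$). A join $\bigvee S$ existing in $A$ is distributive if $a\wedge\bigvee S=\bigvee\{a\wedge s: s\in S\}$ for all $a\in A$; a D-ideal is a downset closed under all distributive joins of its subsets; $\mathcal{BL} A$ (the Bruns-Lakser completion) is the frame of D-ideals of $A$. A relative annihilator of $A$ is a downset $\langle a,b\rangle=\{x\in A: a\wedge x\le b\}$; $\mathcal{R} A$ is the poset of relative annihilators. $A$ is proHeyting if every relative annihilator is a normal ideal. The proHeyting extension $\mathrm{p}\mathcal{H} B$ of a meet-semilattice $B$ is the bounded sublattice of $\mathcal{BL} B$ generated by the relative annihilators of $B$. $A$ is identified with its principal downsets, so $A\le\mathcal{DM} A\le\mathcal{BL} A$; for $A\le B\le\mathcal{BL} A$ one has $\mathcal{BL} B\cong\mathcal{BL} A$, and these are identified (so in particular $\mathcal{BL}(\mathcal{DM} A)=\mathcal{BL} A$), and $\mathcal{R} A$ is identified with its image in $\mathcal{R} B$ via $\langle a,b\rangle_A\mapsto\langle a,b\rangle_B$. *)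

From mathcomp Require Import all_boot all_order.
Set Implicit Arguments. Unset Strict Implicit. Unset Printing Implicit Defensive.
Import Order.TTheory.

Section Generic.
Variables (X : Type) (le : X -> X -> Prop) (mt : X -> X -> X).

Definition is_lub (S : X -> Prop) (s : X) : Prop :=
  (forall x, S x -> le x s) /\ (forall u, (forall x, S x -> le x u) -> le s u).

Definition distributive_join (S : X -> Prop) (s : X) : Prop :=
  is_lub S s /\
  forall a, is_lub (fun y => exists2 x, S x & y = mt a x) (mt a s).

Definition downset (I : X -> Prop) : Prop :=
  forall x y, le x y -> I y -> I x.

Definition upper (N : X -> Prop) : X -> Prop :=
  fun u => forall x, N x -> le x u.
Definition lower (U : X -> Prop) : X -> Prop :=
  fun x => forall u, U u -> le x u.

Definition normal_ideal (N : X -> Prop) : Prop :=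
  forall x, N x <-> lower (upper N) x.

Definition D_ideal (I : X -> Prop) : Prop :=
  downset I /\
  forall (S : X -> Prop) s, (forall x, S x -> I x) -> distributive_join S s -> I s.

(* principal downset ↓b (the image of X in its Bruns-Lakser completion) *)
Definition principal (I : X -> Prop) : Prop :=
  exists b, forall x, I x <-> le x b.

Definition rel_ann (a b : X) : X -> Prop := fun x => le (mt a x) b.

Definition BL_meet (I J : X -> Prop) : X -> Prop := fun x => I x /\ J x.
Definition BL_join (I J : X -> Prop) : X -> Prop :=
  fun x => forall K, D_ideal K -> (forall y, I y \/ J y -> K y) -> K x.
Definition BL_top : X -> Prop := fun _ => True.
Definition BL_bot : X -> Prop := fun x => forall K, D_ideal K -> K x.

(* pH X: the bounded sublattice of BL X generated by the relative annihilators
   (sets are considered up to extensional equality). *)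
Inductive pH : (X -> Prop) -> Prop :=
  | pH_ann a b : pH (rel_ann a b)
  | pH_top : pH BL_top
  | pH_bot : pH BL_bot
  | pH_meet I J : pH I -> pH J -> pH (BL_meet I J)
  | pH_join I J : pH I -> pH J -> pH (BL_join I J)
  | pH_ext I J : pH I -> (forall x, I x <-> J x) -> pH J.

Lemma normal_ideal_meet N M :
  normal_ideal N -> normal_ideal M -> normal_ideal (fun x => N x /\ M x).
Proof.
move=> hN hM x; split.
  by move=> Hx u Hu; apply: Hu.
move=> Hx; split.
  apply/hN => u Hu; apply: Hx => y [Ny _]; exact: Hu.
apply/hM => u Hu; apply: Hx => y [_ My]; exact: Hu.
Qed.

End Generic.

Definition leA {d} {A : meetSemilatticeType d} (x y : A) : Prop := (x <= y)%O.

Definition proHeyting {d} (A : meetSemilatticeType d) : Prop :=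
  forall a b : A, normal_ideal leA (rel_ann leA Order.meet a b).

Definition DM {d} (A : meetSemilatticeType d) : Type :=
  {N : A -> Prop | normal_ideal leA N}.

Definition leDM {d} {A : meetSemilatticeType d} (N M : DM A) : Prop :=
  forall x, proj1_sig N x -> proj1_sig M x.

Definition meetDM {d} {A : meetSemilatticeType d} (N M : DM A) : DM A :=
  exist _ (fun x => proj1_sig N x /\ proj1_sig M x)
    (normal_ideal_meet (proj2_sig N) (proj2_sig M)).

From mathcomp Require Import all_boot all_order.
Import Order.TTheory.
Set Implicit Arguments.
Unset Strict Implicit.
Local Open Scope order_scope.

(* If A is proHeyting, binary meets in DM A distribute over arbitrary joins:
   for x in a /\ \/N_i and u above every a /\ N_i, the normal ideal <x,u>
   contains every N_i, hence \/N_i, hence x = x /\ x <= u.  So every join of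
   DM A is distributive, and a D-ideal, which contains its own join, is the
   principal downset of that join; relative annihilators and top, bottom,
   meets and joins of D-ideals are D-ideals, so this covers pH (DM A) too.
   Conversely, if the relative annihilator <a,b> computed in DM A is a
   principal downset of some M, then M and the relative annihilator <a,b>
   of A have the same elements, so the latter is a normal ideal. *)

Section DIdeals.
Variables (X : Type) (le : X -> X -> Prop) (mt : X -> X -> X).
Hypothesis leX_trans : forall {x y z}, le x y -> le y z -> le x z.
Hypothesis leX_mt2l : forall a {x y}, le x y -> le (mt a x) (mt a y).

Lemma D_ideal_ext I J :
  D_ideal le mt I -> (forall x, I x <-> J x) -> D_ideal le mt J.
Proof.
move=> [downI joinI] IJ; split.
  by move=> x y lexy /IJ Iy; apply/IJ; exact: downI lexy Iy.
by move=> S s SJ djs; apply/IJ; apply: joinI djs => x /SJ /IJ.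
Qed.

Lemma principal_D_ideal I : principal le I -> D_ideal le mt I.
Proof.
move=> [b Ib]; split.
  by move=> x y lexy /Ib leyb; apply/Ib; exact: leX_trans lexy leyb.
by move=> S s SI [[_ lub_s] _]; apply/Ib; apply: lub_s => x /SI /Ib.
Qed.

Lemma rel_ann_D_ideal a b : D_ideal le mt (rel_ann le mt a b).
Proof.
split=> [x y lexy|S s SR [_ distr_s]]; first exact: leX_trans (leX_mt2l a lexy).
by have [_ lub_as] := distr_s a; apply: lub_as => _ [x /SR Rx ->].
Qed.

Lemma D_ideal_bigcap (P : (X -> Prop) -> Prop) :
  D_ideal le mt (fun x => forall K, D_ideal le mt K -> P K -> K x).
Proof.
split=> [x y lexy Ky K DK PK|S s SK djs K DK PK].
  exact: (proj1 DK) lexy (Ky K DK PK).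
by apply: (proj2 DK) djs => x /SK; apply.
Qed.

Lemma D_ideal_BL_meet I J :
  D_ideal le mt I -> D_ideal le mt J -> D_ideal le mt (BL_meet I J).
Proof.
move=> [downI joinI] [downJ joinJ]; split.
  by move=> x y lexy [Iy Jy]; split; [exact: downI lexy Iy|exact: downJ lexy Jy].
by move=> S s SIJ djs; split; [apply: joinI djs|apply: joinJ djs] => x /SIJ [].
Qed.

Lemma pH_D_ideal I : pH le mt I -> D_ideal le mt I.
Proof.
elim=> {I} [a b|||I J _ DI _ DJ|I J _ _ _ _|I J _ DI IJ].
- exact: rel_ann_D_ideal.
- by split.
- by apply: D_ideal_ext (D_ideal_bigcap (fun _ => True)) _ => x; firstorder.
- exact: D_ideal_BL_meet.
- exact: D_ideal_bigcap.
- exact: D_ideal_ext IJ.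
Qed.

Lemma D_ideal_principal_of_distributive_joins :
  (forall S, exists s, distributive_join le mt S s) ->
  forall I, D_ideal le mt I -> principal le I.
Proof.
move=> distr_joins I [downI joinI]; have [s djs] := distr_joins I.
have Is : I s by apply: joinI djs.
exists s => x; split; first exact: (proj1 (proj1 djs)).
by move=> lexs; apply: downI lexs Is.
Qed.

End DIdeals.

Section DedekindMacNeille.
Variables (d : Order.disp_t) (A : meetSemilatticeType d).

Lemma normal_ideal_downset {N : A -> Prop} {x y} :
  normal_ideal leA N -> N x -> leA y x -> N y.
Proof.
by move=> nN Nx leyx; apply/nN => u Nu; apply: le_trans leyx (Nu x Nx).
Qed.

Lemma normal_ideal_lower_upper (U : A -> Prop) :
  normal_ideal leA (lower leA (upper leA U)).
Proof.
move=> x; split=> [x_lu u u_ulu|x_lulu u u_uU]; first exact: u_ulu.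
by apply: x_lulu => y y_lu; apply: y_lu.
Qed.

Lemma normal_ideal_principal (a : A) : normal_ideal leA (fun x => leA x a).
Proof.
by move=> x; split=> [lexa u ub_u|x_lower]; [apply: ub_u lexa|apply: x_lower => y].
Qed.

Lemma normal_ideal_top : normal_ideal leA (fun _ : A => True).
Proof. by move=> x; split=> // _ u ub_u; apply: ub_u. Qed.

Lemma normal_ideal_ext {N P : A -> Prop} :
  normal_ideal leA N -> (forall x, N x <-> P x) -> normal_ideal leA P.
Proof.
move=> nN NP x; split=> [/NP /nN Nx u uP|xN].
  by apply: Nx => y /NP; apply: uP.
by apply/NP/nN => u uN; apply: xN => y /NP; apply: uN.
Qed.

Implicit Types (a b : A) (N M : DM A) (U : DM A -> Prop).

Definition principalDM a : DM A := exist _ _ (normal_ideal_principal a).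
Definition topDM : DM A := exist _ _ normal_ideal_top.

Definition joinDM U : DM A :=
  exist _ _ (normal_ideal_lower_upper
               (fun x => exists2 N, U N & proj1_sig N x)).

Lemma leDM_trans N M P : leDM N M -> leDM M P -> leDM N P.
Proof. by move=> leNM leMP x /leNM /leMP. Qed.

Lemma leDM_meet2l P N M : leDM N M -> leDM (meetDM P N) (meetDM P M).
Proof. by move=> leNM x [Px Nx]; split=> //; apply: leNM. Qed.

Lemma joinDM_lub U : is_lub leDM U (joinDM U).
Proof.
split=> [N UN x Nx u|M ubM x x_join]; first by apply; exists N.
by apply/(proj2_sig M x) => u uM; apply: x_join => y [N /ubM leNM /leNM]; apply: uM.
Qed.

Lemma proHeyting_meetDM_joinDM U (c : DM A) :
  proHeyting A ->
  is_lub leDM (fun P => exists2 N, U N & P = meetDM c N) (meetDM c (joinDM U)).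
Proof.
move=> proHA; have [ub_join lub_join] := joinDM_lub U; split.
  by move=> _ [N UN ->]; apply/leDM_meet2l/ub_join.
move=> M ubM x [cx join_x]; apply/(proj2_sig M x) => u uM.
pose xu : DM A := exist _ _ (proHA x u).
have le_join_xu : leDM (joinDM U) xu.
  apply: lub_join => N UN y Ny; apply: uM; apply: (ubM (meetDM c N)).
    by exists N.
  split; first exact: normal_ideal_downset (proj2_sig c) cx (leIl _ _).
  exact: normal_ideal_downset (proj2_sig N) Ny (leIr _ _).
by have := le_join_xu x join_x; rewrite /= /rel_ann /leA meetxx.
Qed.

Lemma proHeyting_distributive_joinDM U :
  proHeyting A -> distributive_join leDM meetDM U (joinDM U).
Proof.
by move=> proHA; split=> [|c]; [apply: joinDM_lub|apply: proHeyting_meetDM_joinDM].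
Qed.

Lemma proHeyting_D_ideal_principal (I : DM A -> Prop) :
  proHeyting A -> D_ideal leDM meetDM I -> principal leDM I.
Proof.
move=> proHA; apply: D_ideal_principal_of_distributive_joins => U.
by exists (joinDM U); apply: proHeyting_distributive_joinDM.
Qed.

Lemma rel_ann_topDM N M : rel_ann leDM meetDM topDM M N <-> leDM N M.
Proof. by split=> [le_meet x Nx|leNM x [_ /leNM]]; first apply: le_meet. Qed.

Lemma principal_pH (I : DM A -> Prop) : principal leDM I -> pH leDM meetDM I.
Proof.
move=> [M IM]; apply: pH_ext (pH_ann _ _ topDM M) _ => N.
by split=> [/rel_ann_topDM/IM|/IM/rel_ann_topDM].
Qed.

Lemma proHeyting_of_principal_rel_ann :
  (forall a b, principal leDM (rel_ann leDM meetDM (principalDM a) (principalDM b))) ->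
  proHeyting A.
Proof.
move=> principal_ann a b; have [M annM] := principal_ann a b.
apply: (normal_ideal_ext (proj2_sig M)) => y; split.
  move=> My; have /annM ann_M : leDM M M by [].
  apply: (ann_M (a `&` y)); split; first exact: leIl.
  exact: normal_ideal_downset (proj2_sig M) My (leIr _ _).
move=> le_ay_b.
have /annM : rel_ann leDM meetDM (principalDM a) (principalDM b) (principalDM y).
  by move=> x [lexa lexy]; apply: le_trans le_ay_b; rewrite lexI lexa.
by apply; apply: lexx.
Qed.

End DedekindMacNeille.

Theorem proposition3p12 (d : Order.disp_t) (A : meetSemilatticeType d) :
  (proHeyting A <->
     (forall I : DM A -> Prop, D_ideal leDM meetDM I <-> principal leDM I)) /\
  (proHeyting A <->
     (forall I : DM A -> Prop, pH leDM meetDM I <-> principal leDM I)).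
Proof.
have D_ideal_pH := pH_D_ideal (@leDM_trans d A) (@leDM_meet2l d A).
have D_ideal_ann := rel_ann_D_ideal (@leDM_trans d A) (@leDM_meet2l d A).
have D_ideal_of_principal := principal_D_ideal (@meetDM d A) (@leDM_trans d A).
split; split=> [proHA I|principal_iff].
- by split; [apply: proHeyting_D_ideal_principal|apply: D_ideal_of_principal].
- by apply: proHeyting_of_principal_rel_ann => a b; apply/principal_iff/D_ideal_ann.
- by split=> [/D_ideal_pH|]; [apply: proHeyting_D_ideal_principal|apply: principal_pH].
- by apply: proHeyting_of_principal_rel_ann => a b; apply/principal_iff/pH_ann.
Qed.
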